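(* There exist a compact metric space $X$ and a homeomorphism $f\colon X\to X$ such that $\mathrm{SProx}(f)=\Delta_X$ but $\mathrm{Prox}(f)\ne\Delta_X$.
   Context: $\Delta_X=\{(x,x):x\in X\}$. $\mathrm{Prox}(f)=\{(x,y):\liminf_{n\to\infty} d(f^nx,f^ny)=0\}$; $\mathrm{SProx}(f)=\{(x,y):\{n\in\mathbb N:d(f^nx,f^ny)<\varepsilon\}$ is syndetic for every $\varepsilon>0\}$, where a subset of $\mathbb N$ is syndetic if it meets every subset of $\mathbb N$ containing arbitrarily long runs of consecutive integers. *)

From Stdlib Require Import Reals List.
Open Scope R_scope.

Notation MS := Metric_Space.

Definition is_open {X : MS} (U : Base X -> Prop) : Prop :=
  forall x, U x -> exists r, r > 0 /\ forall y, dist X x y < r -> U y.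

Definition compact_space (X : MS) : Prop :=
  forall (I : Type) (U : I -> Base X -> Prop),
    (forall i, is_open (U i)) -> (forall x, exists i, U i x) ->
    exists l : list I, forall x, exists i, In i l /\ U i x.

Definition continuous_map {X Y : MS} (f : Base X -> Base Y) : Prop :=
  forall x eps, eps > 0 -> exists delta, delta > 0 /\
    forall y, dist X x y < delta -> dist Y (f x) (f y) < eps.

Definition homeomorphism {X : MS} (f : Base X -> Base X) : Prop :=
  exists g : Base X -> Base X,
    (forall x, g (f x) = x) /\ (forall y, f (g y) = y) /\
    continuous_map f /\ continuous_map g.

Definition thick (T : nat -> Prop) : Prop :=
  forall L : nat, exists a : nat, forall k, (k < L)%nat -> T (a + k)%nat.

Definition syndetic (S : nat -> Prop) : Prop :=
  forall T, thick T -> exists n, S n /\ T n.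

(* (x,y) in Prox(f): liminf_n d(f^n x, f^n y) = 0 *)
Definition Prox {X : MS} (f : Base X -> Base X) (x y : Base X) : Prop :=
  forall eps, eps > 0 -> forall N : nat, exists n, (N <= n)%nat /\
    dist X (Nat.iter n f x) (Nat.iter n f y) < eps.

Definition SProx {X : MS} (f : Base X -> Base X) (x y : Base X) : Prop :=
  forall eps, eps > 0 ->
    syndetic (fun n => dist X (Nat.iter n f x) (Nat.iter n f y) < eps).

From Stdlib Require Import Reals List Lra Lia Psatz ZArith.
From Stdlib Require Import ProofIrrelevance Classical IndefiniteDescription.
Open Scope R_scope.

(* X is the circle R/Z plus one orbit of points p_n (n in Z) accumulating on
   it: p_n sits at height rad n = 1/|3n+1| above the circle, at angle
   theta n = n*alpha + sqrt n (alpha = sqrt 2; sqrt n = 0 for n < 0); the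
   metric is |height difference| + circle distance of angles.  F shifts the
   orbit and rotates the circle by alpha; it is a homeomorphism since
   sqrt (n+1) - sqrt n -> 0, and X is compact by Heine-Borel on [0,1].
   No pair off the diagonal is syndetically proximal, because its orbits stay
   apart along a thick set of times: F is an isometry on the circle; p_n and
   p_m have angles differing by (n-m)*alpha + o(1) with (n-m)*alpha not an
   integer; against a circle point, p_n's angle error is a constant plus
   sqrt (n+k), which grows slowly and so stays 1/4 away from Z on long runs.
   Yet p_0 and the circle origin are proximal: at the times j^2 their angles
   agree modulo 1 and their distance is rad (j^2) -> 0.
   The file proves general facts on syndetic proximality, the circle norm,
   square roots and sqrt 2 first, then builds X and F. *)

Section Proximality.
Variables (X : MS) (f : Base X -> Base X).

Lemma thick_tail (N : nat) : thick (fun k => (N <= k)%nat).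
Proof. intro L. exists N. intros k _. lia. Qed.

Lemma SProx_refl (x : Base X) : SProx f x x.
Proof.
  intros eps Heps T HT. destruct (HT 1%nat) as [a Ha].
  exists (a + 0)%nat. split; [|apply Ha; lia].
  destruct (dist_refl X (Nat.iter (a + 0) f x) (Nat.iter (a + 0) f x)) as [_ ->]; auto.
Qed.

Lemma SProx_sym (x y : Base X) : SProx f x y -> SProx f y x.
Proof.
  intros H eps Heps T HT. destruct (H eps Heps T HT) as [k [Hk Tk]].
  exists k. rewrite dist_sym. auto.
Qed.

Lemma not_SProx_of_thick_separation (x y : Base X) (eps : R) (T : nat -> Prop) :
  thick T -> 0 < eps ->
  (forall k, T k -> eps <= dist X (Nat.iter k f x) (Nat.iter k f y)) ->
  ~ SProx f x y.
Proof.
  intros HT Heps Hsep HS. destruct (HS eps Heps T HT) as [k [Hk Tk]].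
  specialize (Hsep k Tk). lra.
Qed.

End Proximality.

Lemma frac_part_range (t : R) : 0 <= frac_part t < 1.
Proof. destruct (base_fp t). lra. Qed.

Definition znorm (t : R) : R := Rmin (frac_part t) (1 - frac_part t).

Lemma znorm_le_dist (t : R) (z : Z) : znorm t <= Rabs (t - IZR z).
Proof.
  unfold znorm, frac_part. pose proof (base_Int_part t) as [Hlo Hhi].
  destruct (Z_le_gt_dec z (Int_part t)) as [Hz|Hz].
  - apply IZR_le in Hz. rewrite Rabs_right by lra.
    apply Rle_trans with (t - IZR (Int_part t)); [apply Rmin_l|lra].
  - assert (Hz' : (Int_part t + 1 <= z)%Z) by lia.
    apply IZR_le in Hz'. rewrite plus_IZR in Hz'. rewrite Rabs_left1 by lra.
    apply Rle_trans with (1 - (t - IZR (Int_part t))); [apply Rmin_r|lra].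
Qed.

Lemma znorm_attained (t : R) : exists z : Z, znorm t = Rabs (t - IZR z).
Proof.
  unfold znorm, frac_part. pose proof (base_Int_part t) as [Hlo Hhi].
  destruct (Rle_dec (t - IZR (Int_part t)) (1 - (t - IZR (Int_part t)))).
  - exists (Int_part t). rewrite Rmin_left, Rabs_right by lra. reflexivity.
  - exists (Int_part t + 1)%Z. rewrite Rmin_right by lra.
    rewrite plus_IZR, Rabs_left1 by lra. ring.
Qed.

Lemma znorm_nonneg (t : R) : 0 <= znorm t.
Proof. destruct (znorm_attained t) as [z ->]. apply Rabs_pos. Qed.

Lemma znorm_le_abs (t : R) : znorm t <= Rabs t.
Proof. pose proof (znorm_le_dist t 0) as H. rewrite Rminus_0_r in H. exact H. Qed.

Lemma znorm_int (z : Z) : znorm (IZR z) = 0.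
Proof.
  pose proof (znorm_le_dist (IZR z) z). pose proof (znorm_nonneg (IZR z)).
  rewrite Rminus_diag, Rabs_R0 in *. lra.
Qed.

Lemma znorm_zero (t : R) : znorm t = 0 -> exists z : Z, t = IZR z.
Proof.
  intro H. destruct (znorm_attained t) as [z Hz]. exists z. rewrite H in Hz.
  destruct (Req_dec (t - IZR z) 0) as [|Hne]; [lra|].
  exfalso. apply (Rabs_no_R0 _ Hne). auto.
Qed.

Lemma znorm_triangle (s t : R) : znorm (s + t) <= znorm s + znorm t.
Proof.
  destruct (znorm_attained s) as [a ->], (znorm_attained t) as [b ->].
  apply Rle_trans with (Rabs (s + t - IZR (a + b))); [apply znorm_le_dist|].
  rewrite plus_IZR. replace (s + t - (IZR a + IZR b)) with ((s - IZR a) + (t - IZR b)) by ring.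
  apply Rabs_triang.
Qed.

Lemma znorm_shift (t : R) (z : Z) : znorm (t + IZR z) = znorm t.
Proof.
  apply Rle_antisym.
  - destruct (znorm_attained t) as [a ->].
    replace (t - IZR a) with (t + IZR z - IZR (a + z)) by (rewrite plus_IZR; ring).
    apply znorm_le_dist.
  - destruct (znorm_attained (t + IZR z)) as [a ->].
    replace (t + IZR z - IZR a) with (t - IZR (a - z)) by (rewrite minus_IZR; ring).
    apply znorm_le_dist.
Qed.

Lemma znorm_opp (t : R) : znorm (- t) = znorm t.
Proof.
  assert (H : forall s, znorm (- s) <= znorm s).
  { intro s. destruct (znorm_attained s) as [a ->].
    replace (s - IZR a) with (- (- s - IZR (- a))) by (rewrite opp_IZR; ring).
    rewrite Rabs_Ropp. apply znorm_le_dist. }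
  apply Rle_antisym; [apply H|]. rewrite <- (Ropp_involutive t) at 1. apply H.
Qed.

Lemma znorm_sym (s t : R) : znorm (s - t) = znorm (t - s).
Proof. rewrite <- znorm_opp. f_equal. ring. Qed.

Lemma znorm_perturb (s t : R) : znorm s - Rabs t <= znorm (s + t).
Proof.
  pose proof (znorm_triangle (s + t) (- t)) as H. replace (s + t + - t) with s in H by ring.
  pose proof (znorm_le_abs (- t)) as H'. rewrite Rabs_Ropp in H'. lra.
Qed.

Lemma znorm_frac_part (s u : R) : znorm (frac_part s - u) = znorm (s - u).
Proof.
  unfold frac_part. replace (s - IZR (Int_part s) - u) with (s - u + IZR (- Int_part s))
    by (rewrite opp_IZR; ring).
  apply znorm_shift.
Qed.

Lemma znorm_quarter (t : R) (J : Z) : IZR J + /4 <= t <= IZR J + 3/4 -> /4 <= znorm t.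
Proof.
  intro Ht. destruct (znorm_attained t) as [a ->].
  destruct (Z_le_gt_dec a J) as [H|H].
  - apply IZR_le in H. rewrite Rabs_right by lra. lra.
  - assert (H' : (J + 1 <= a)%Z) by lia. apply IZR_le in H'. rewrite plus_IZR in H'.
    rewrite Rabs_left1 by lra. lra.
Qed.

(* |sqrt u - sqrt v| * sqrt u <= |u - v|, from u - v = (sqrt u - sqrt v)(sqrt u + sqrt v). *)
Lemma sqrt_diff_bound (u v : R) : 0 <= u -> 0 <= v ->
  Rabs (sqrt u - sqrt v) * sqrt u <= Rabs (u - v).
Proof.
  intros Hu Hv. pose proof (sqrt_pos u). pose proof (sqrt_pos v).
  replace (u - v) with ((sqrt u - sqrt v) * (sqrt u + sqrt v))
    by (pose proof (sqrt_sqrt u Hu); pose proof (sqrt_sqrt v Hv); nra).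
  rewrite Rabs_mult, (Rabs_right (sqrt u + sqrt v)) by lra.
  apply Rmult_le_compat_l; [apply Rabs_pos|lra].
Qed.

(* sqrt is uniformly flat at infinity on integers (with sqrt = 0 on negatives):
   integers at bounded distance D far from 0 have close square roots. *)
Lemma sqrt_int_close (eps D : R) : 0 < eps -> 0 <= D ->
  exists M : R, forall n m : Z, M < IZR (Z.abs n) -> Rabs (IZR n - IZR m) <= D ->
    Rabs (sqrt (IZR n) - sqrt (IZR m)) < eps.
Proof.
  intros Heps HD. exists (D + (D / eps) * (D / eps)). intros n m Hn Hnm.
  assert (HDe : 0 <= D / eps)
    by (unfold Rdiv; apply Rmult_le_pos; [lra|left; apply Rinv_0_lt_compat; lra]).
  assert (Hbd : IZR n - D <= IZR m <= IZR n + D).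
  { pose proof (Rle_abs (IZR n - IZR m)). pose proof (Rle_abs (IZR m - IZR n)) as H'.
    rewrite Rabs_minus_sym in H'. lra. }
  rewrite abs_IZR in Hn. destruct (Rle_lt_dec 0 (IZR n)) as [Hpos|Hneg].
  - rewrite Rabs_right in Hn by lra.
    assert (Hm : 0 <= IZR m) by nra.
    assert (Hs : D / eps < sqrt (IZR n)).
    { rewrite <- (sqrt_square (D / eps)) by lra. apply sqrt_lt_1; nra. }
    pose proof (sqrt_diff_bound _ _ Hpos Hm) as Hb.
    assert (HD' : D = D / eps * eps) by (field; lra).
    destruct (Rlt_le_dec (Rabs (sqrt (IZR n) - sqrt (IZR m))) eps) as [|Hge]; auto.
    exfalso. pose proof (Rabs_pos (sqrt (IZR n) - sqrt (IZR m))). nra.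
  - rewrite Rabs_left in Hn by lra.
    assert (Hm : IZR m <= 0) by nra.
    rewrite !sqrt_neg_0 by lra. rewrite Rminus_diag, Rabs_R0. exact Heps.
Qed.

(* sqrt grows so slowly that c + sqrt k stays 1/4 away from Z along
   arbitrarily long runs of consecutive integers k, arbitrarily far out. *)
Lemma sqrt_long_runs_far_from_Z (c : R) (L : nat) (N : Z) :
  exists m : Z, (N <= m)%Z /\
    forall k, (k < L)%nat -> /4 <= znorm (c + sqrt (IZR (m + Z.of_nat k))).
Proof.
  set (J := up (INR L + IZR (Z.abs N) + 1 + c)).
  set (A := IZR J + /4 - c).
  assert (HA : INR L + IZR (Z.abs N) + 1 < A).
  { unfold A, J. destruct (archimed (INR L + IZR (Z.abs N) + 1 + c)). lra. }
  assert (HN : IZR N <= IZR (Z.abs N)) by (apply IZR_le; lia).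
  assert (HN0 : 0 <= IZR (Z.abs N)) by (apply IZR_le; lia).
  pose proof (pos_INR L).
  set (m := up (A * A)).
  assert (Hm : A * A < IZR m <= A * A + 1) by (unfold m; destruct (archimed (A * A)); lra).
  exists m. split; [apply le_IZR; nra|].
  intros k Hk. apply (znorm_quarter _ J).
  assert (Hk' : INR k + 1 <= INR L) by (rewrite <- S_INR; apply le_INR; lia).
  set (w := IZR (m + Z.of_nat k)).
  assert (Hw : A * A < w <= A * A + A).
  { unfold w. rewrite plus_IZR, <- INR_IZR_INZ. pose proof (pos_INR k). lra. }
  assert (Hlo : A < sqrt w) by (rewrite <- (sqrt_square A) by lra; apply sqrt_lt_1; nra).
  assert (Hhi : sqrt w <= A + /2)
    by (rewrite <- (sqrt_square (A + /2)) by lra; apply sqrt_le_1; nra).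
  unfold A in Hlo, Hhi. lra.
Qed.

Lemma even_of_even_square (q : Z) : Z.even (q * q) = true -> exists q', q = (2 * q')%Z.
Proof.
  rewrite Z.even_mul, Bool.orb_diag. intro H.
  apply Z.even_spec in H. destruct H as [q' Hq']. exists q'. exact Hq'.
Qed.

Lemma no_int_sqrt2 (p q : Z) : p <> 0%Z -> (2 * p * p <> q * q)%Z.
Proof.
  remember (Z.abs_nat p) as k eqn:Hk. revert p q Hk.
  induction k as [k IH] using (well_founded_induction lt_wf).
  intros p q Hk Hp E.
  destruct (even_of_even_square q) as [q' ->].
  { rewrite <- E, <- Z.mul_assoc, Z.even_mul. reflexivity. }
  destruct (even_of_even_square p) as [p' ->].
  { replace (p * p)%Z with (2 * (q' * q'))%Z by lia. rewrite Z.even_mul. reflexivity. }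
  apply (IH (Z.abs_nat p') ltac:(lia) p' q' eq_refl ltac:(lia)). lia.
Qed.

(* The rotation number of F on the circle. *)
Definition alpha : R := sqrt 2.

Lemma znorm_mult_alpha_pos (p : Z) : p <> 0%Z -> 0 < znorm (IZR p * alpha).
Proof.
  intro Hp. destruct (Rle_lt_or_eq_dec _ _ (znorm_nonneg (IZR p * alpha))) as [|H]; auto.
  exfalso. destruct (znorm_zero _ (eq_sym H)) as [q Hq].
  apply (no_int_sqrt2 p q Hp), eq_IZR.
  rewrite !mult_IZR, <- Hq. unfold alpha.
  replace (IZR p * sqrt 2 * (IZR p * sqrt 2)) with (IZR p * IZR p * (sqrt 2 * sqrt 2)) by ring.
  rewrite sqrt_sqrt by lra. ring.
Qed.

Definition Circ : Type := {a : R | 0 <= a < 1}.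

Definition to_circle (t : R) : Circ := exist _ (frac_part t) (frac_part_range t).

Lemma circ_eq_mod (a b : Circ) (z : Z) : proj1_sig a = proj1_sig b + IZR z -> a = b.
Proof.
  destruct a as [a Ha], b as [b Hb]; simpl. intro E.
  assert (Hz : z = 0%Z).
  { assert (-1 < IZR z < 1) as [H1 H2] by lra. apply lt_IZR in H1, H2. lia. }
  subst z. simpl in E. assert (a = b) by lra. subst b. f_equal. apply proof_irrelevance.
Qed.

Lemma to_circle_mod (t : R) : exists z : Z, proj1_sig (to_circle t) = t + IZR z.
Proof. exists (- Int_part t)%Z. simpl. unfold frac_part. rewrite opp_IZR. ring. Qed.

(* The space: the circle together with one orbit Z; the n-th orbit point
   sits at height rad n above the circle, at angle theta n. *)
Definition Pt : Type := (Z + Circ)%type.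

(* |3n+1| is positive and injective in n, so the heights are distinct. *)
Definition denom (n : Z) : Z := Z.abs (3 * n + 1).
Definition rad (n : Z) : R := / IZR (denom n).

Definition theta (n : Z) : R := IZR n * alpha + sqrt (IZR n).

Definition height (x : Pt) : R := match x with inl n => rad n | inr _ => 0 end.
Definition angle (x : Pt) : R := match x with inl n => theta n | inr a => proj1_sig a end.

Definition d (x y : Pt) : R := Rabs (height x - height y) + znorm (angle x - angle y).

Lemma denom_ge_1 (n : Z) : 1 <= IZR (denom n).
Proof. apply IZR_le. unfold denom. lia. Qed.

Lemma rad_pos (n : Z) : 0 < rad n.
Proof. apply Rinv_0_lt_compat. pose proof (denom_ge_1 n). lra. Qed.

Lemma rad_inj (n m : Z) : rad n = rad m -> n = m.
Proof.
  intro H. apply Rinv_eq_reg, eq_IZR in H. unfold denom in H. lia.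
Qed.

Lemma height_nonneg (x : Pt) : 0 <= height x.
Proof. destruct x; simpl; [left; apply rad_pos|lra]. Qed.

Lemma d_nonneg (x y : Pt) : d x y >= 0.
Proof.
  unfold d. pose proof (Rabs_pos (height x - height y)).
  pose proof (znorm_nonneg (angle x - angle y)). lra.
Qed.

Lemma d_sym (x y : Pt) : d x y = d y x.
Proof. unfold d. rewrite Rabs_minus_sym, znorm_sym. reflexivity. Qed.

Lemma d_triangle (x y z : Pt) : d x y <= d x z + d z y.
Proof.
  unfold d.
  pose proof (Rabs_triang (height x - height z) (height z - height y)) as H1.
  pose proof (znorm_triangle (angle x - angle z) (angle z - angle y)) as H2.
  replace (height x - height z + (height z - height y)) with (height x - height y) in H1 by ring.
  replace (angle x - angle z + (angle z - angle y)) with (angle x - angle y) in H2 by ring.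
  lra.
Qed.

Lemma d_zero (x y : Pt) : d x y = 0 <-> x = y.
Proof.
  split.
  - unfold d. intro H. pose proof (Rabs_pos (height x - height y)).
    pose proof (znorm_nonneg (angle x - angle y)).
    assert (Hh : height x = height y).
    { destruct (Req_dec (height x - height y) 0) as [|Hne]; [lra|].
      pose proof (Rabs_pos_lt _ Hne). lra. }
    assert (Ha : znorm (angle x - angle y) = 0) by lra.
    destruct x as [n|a], y as [m|b]; simpl in Hh, Ha.
    + f_equal. apply rad_inj, Hh.
    + pose proof (rad_pos n). lra.
    + pose proof (rad_pos m). lra.
    + f_equal. destruct (znorm_zero _ Ha) as [z Hz]. apply (circ_eq_mod a b z). lra.
  - intros ->. unfold d. rewrite !Rminus_diag, Rabs_R0.
    pose proof (znorm_int 0) as H0. simpl in H0. lra.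
Qed.

Definition X : Metric_Space := Build_Metric_Space Pt d d_nonneg d_sym d_zero d_triangle.

Lemma d_circle_circle (a b : Circ) : d (inr a) (inr b) = znorm (proj1_sig a - proj1_sig b).
Proof. unfold d; simpl. rewrite Rminus_diag, Rabs_R0. ring. Qed.

Lemma d_orbit_circle (n : Z) (a : Circ) :
  d (inl n) (inr a) = rad n + znorm (theta n - proj1_sig a).
Proof. unfold d; simpl. rewrite Rminus_0_r, Rabs_right by (left; apply rad_pos). ring. Qed.

Lemma d_orbit_orbit (n m : Z) :
  d (inl n) (inl m) = Rabs (rad n - rad m) + znorm (theta n - theta m).
Proof. reflexivity. Qed.

(* step e shifts the orbit by e and rotates the circle by e * alpha;
   it is the e-th power of the homeomorphism F = step 1. *)
Definition step (e : Z) (x : Pt) : Pt :=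
  match x with
  | inl n => inl (n + e)%Z
  | inr a => inr (to_circle (proj1_sig a + IZR e * alpha))
  end.

Definition F : Pt -> Pt := step 1.

Lemma step_cancel (e : Z) (x : Pt) : step (- e) (step e x) = x.
Proof.
  destruct x as [n|a]; unfold step.
  - f_equal. lia.
  - f_equal. destruct (to_circle_mod (proj1_sig a + IZR e * alpha)) as [z Hz].
    set (b := to_circle (proj1_sig a + IZR e * alpha)) in *.
    destruct (to_circle_mod (proj1_sig b + IZR (- e) * alpha)) as [w Hw].
    apply (circ_eq_mod _ _ (z + w)). rewrite Hw, Hz, opp_IZR, plus_IZR. ring.
Qed.

Lemma inv_gap (a b : R) : 1 <= a -> 1 <= b -> 1 <= Rabs (a - b) ->
  / (a * (a + 1)) <= Rabs (/ a - / b).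
Proof.
  intros Ha Hb Hab.
  replace (/ a - / b) with ((b - a) * / (a * b)) by (field; lra).
  rewrite Rabs_mult, Rabs_inv, Rabs_minus_sym, (Rabs_right (a * b)) by nra.
  assert (Hcase : a + 1 <= b \/ b <= a - 1).
  { destruct (Rle_dec 0 (a - b)); [rewrite Rabs_right in Hab|rewrite Rabs_left in Hab]; lra. }
  assert (Hb' : b <= Rabs (a - b) * (a + 1)).
  { destruct Hcase; [rewrite Rabs_left|rewrite Rabs_right]; nra. }
  assert (H1 : / (a * (a + 1)) = b * / (a * b) * / (a + 1)) by (field; lra).
  rewrite H1. apply Rmult_le_reg_r with (a + 1); [lra|].
  rewrite Rmult_assoc, Rinv_l, Rmult_1_r by lra.
  assert (0 < / (a * b)) by (apply Rinv_0_lt_compat; nra). nra.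
Qed.

(* Each orbit point is isolated: it is the only point of its ball of
   radius 1/(a(a+1)), a = |3n+1|. *)
Lemma orbit_point_isolated (n : Z) :
  exists delta, 0 < delta /\ forall y, d (inl n) y < delta -> y = inl n.
Proof.
  set (a := IZR (denom n)). pose proof (denom_ge_1 n) as Ha. fold a in Ha.
  exists (/ (a * (a + 1))). split; [apply Rinv_0_lt_compat; nra|].
  intros [m|b] Hd.
  - destruct (Z.eq_dec m n) as [->|Hmn]; auto. exfalso.
    rewrite d_orbit_orbit in Hd. pose proof (znorm_nonneg (theta n - theta m)).
    assert (Hsep : 1 <= Rabs (a - IZR (denom m))).
    { unfold a. rewrite <- minus_IZR, <- abs_IZR. apply IZR_le. unfold denom in *. lia. }
    pose proof (inv_gap a _ Ha (denom_ge_1 m) Hsep). unfold rad in Hd. fold a in Hd. lra.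
  - exfalso. rewrite d_orbit_circle in Hd. pose proof (znorm_nonneg (theta n - proj1_sig b)).
    assert (/ (a * (a + 1)) <= / a) by (apply Rinv_le_contravar; nra).
    unfold rad in Hd. fold a in Hd. lra.
Qed.

Lemma rad_lt_of_far (eps : R) (n : Z) : 0 < eps -> / eps < IZR (Z.abs n) -> rad n < eps.
Proof.
  intros Heps Hn.
  assert (Hd : IZR (Z.abs n) <= IZR (denom n)) by (apply IZR_le; unfold denom; lia).
  unfold rad. rewrite <- (Rinv_inv eps). apply Rinv_lt_contravar; [|lra].
  pose proof (Rinv_0_lt_compat eps Heps). nra.
Qed.

Lemma far_of_rad_lt (M : R) :
  exists delta, 0 < delta /\ forall n, rad n < delta -> M < IZR (Z.abs n).
Proof.
  exists (/ (3 * Rabs M + 4)). split; [apply Rinv_0_lt_compat; pose proof (Rabs_pos M); lra|].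
  intros n Hn. unfold rad in Hn. pose proof (denom_ge_1 n). pose proof (Rle_abs M).
  assert (Hbig : 3 * Rabs M + 4 < IZR (denom n)).
  { destruct (Rlt_le_dec (3 * Rabs M + 4) (IZR (denom n))) as [|Hle]; auto.
    pose proof (Rinv_le_contravar _ _ (Rlt_le_trans 0 1 _ Rlt_0_1 (denom_ge_1 n)) Hle). lra. }
  assert (Hd : IZR (denom n) <= 3 * IZR (Z.abs n) + 1).
  { rewrite <- (mult_IZR 3), <- plus_IZR. apply IZR_le. unfold denom. lia. }
  lra.
Qed.

Lemma step_near_circle (e : Z) (eps : R) : 0 < eps ->
  exists delta, 0 < delta /\ forall m, rad m < delta ->
    rad (m + e) < eps /\ Rabs (sqrt (IZR m) - sqrt (IZR (m + e))) < eps.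
Proof.
  intro Heps.
  destruct (sqrt_int_close eps (IZR (Z.abs e)) Heps) as [M HM]; [apply IZR_le; lia|].
  destruct (far_of_rad_lt (Rabs M + / eps + IZR (Z.abs e))) as [delta [Hdelta Hfar]].
  exists delta. split; auto. intros m Hm. specialize (Hfar m Hm).
  pose proof (Rle_abs M). pose proof (Rinv_0_lt_compat eps Heps).
  assert (He0 : 0 <= IZR (Z.abs e)) by (apply IZR_le; lia).
  split.
  - apply rad_lt_of_far; auto.
    assert (IZR (Z.abs m) - IZR (Z.abs e) <= IZR (Z.abs (m + e))).
    { rewrite <- minus_IZR. apply IZR_le. lia. }
    pose proof (Rabs_pos M). lra.
  - apply HM; [lra|]. rewrite <- minus_IZR, <- abs_IZR. apply IZR_le. lia.
Qed.

(* step e is continuous: orbit points are isolated, and near the circle the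
   action on orbit points follows the rotation by e * alpha up to o(1). *)
Lemma step_continuous (e : Z) : continuous_map (X := X) (Y := X) (step e).
Proof.
  intros [n|a] eps Heps; simpl.
  - destruct (orbit_point_isolated n) as [delta [Hdelta Hiso]].
    exists delta. split; auto. intros y Hy. rewrite (Hiso y Hy).
    rewrite (proj2 (d_zero _ _) eq_refl). exact Heps.
  - destruct (step_near_circle e (eps / 4)) as [delta [Hdelta Hnear]]; [lra|].
    exists (Rmin delta (eps / 2)). split; [apply Rmin_case; lra|].
    pose proof (Rmin_l delta (eps / 2)). pose proof (Rmin_r delta (eps / 2)).
    intros [m|b] Hy; unfold step.
    + (* The angle error of the orbit point only gains the square-root correction. *)
      rewrite d_sym, d_orbit_circle in Hy |- *. simpl. rewrite znorm_sym, znorm_frac_part.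
      pose proof (rad_pos m). pose proof (znorm_nonneg (theta m - proj1_sig a)).
      destruct (Hnear m) as [Hrad Hsqrt]; [lra|].
      set (corr := sqrt (IZR m) - sqrt (IZR (m + e))) in Hsqrt.
      assert (Hsplit : proj1_sig a + IZR e * alpha - theta (m + e)
                       = - (theta m - proj1_sig a) + corr)
        by (unfold corr, theta; rewrite plus_IZR; ring).
      rewrite Hsplit. pose proof (znorm_triangle (- (theta m - proj1_sig a)) corr) as Htri.
      rewrite znorm_opp in Htri. pose proof (znorm_le_abs corr). lra.
    + (* On the circle step e is an isometry. *)
      rewrite d_circle_circle in Hy |- *. simpl.
      rewrite znorm_frac_part, znorm_sym, znorm_frac_part.
      replace (proj1_sig b + IZR e * alpha - (proj1_sig a + IZR e * alpha))
        with (proj1_sig b - proj1_sig a) by ring.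
      rewrite znorm_sym. lra.
Qed.

Lemma F_homeomorphism : homeomorphism (X := X) F.
Proof.
  exists (step (-1)). unfold F. repeat split.
  - intro x. apply step_cancel.
  - intro y. rewrite <- (Z.opp_involutive 1) at 1. apply step_cancel.
  - apply step_continuous.
  - apply step_continuous.
Qed.

Lemma iter_F_orbit (k : nat) (n : Z) : Nat.iter k F (inl n) = inl (n + Z.of_nat k)%Z.
Proof. induction k as [|k IH]; simpl; [f_equal; lia|]. rewrite IH. simpl. f_equal. lia. Qed.

Lemma iter_F_circle (k : nat) (a : Circ) : exists (b : Circ) (z : Z),
  Nat.iter k F (inr a) = inr b /\ proj1_sig b = proj1_sig a + INR k * alpha + IZR z.
Proof.
  induction k as [|k [b [z [Hb Hz]]]].
  - exists a, 0%Z. split; [reflexivity|]. simpl. ring.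
  - destruct (to_circle_mod (proj1_sig b + IZR 1 * alpha)) as [w Hw].
    eexists; exists (z + w)%Z.
    change (Nat.iter (S k) F (inr a)) with (F (Nat.iter k F (inr a))). rewrite Hb.
    split; [reflexivity|].
    rewrite Hw, Hz, plus_IZR, S_INR. ring.
Qed.

(* F rotates the circle isometrically, so distinct circle points keep their distance. *)
Lemma circle_pair_not_SProx (a b : Circ) : a <> b -> ~ SProx (X := X) F (inr a) (inr b).
Proof.
  intro Hab. set (eps := znorm (proj1_sig a - proj1_sig b)).
  apply (not_SProx_of_thick_separation X F _ _ eps _ (thick_tail 0)).
  - destruct (Rle_lt_or_eq_dec _ _ (znorm_nonneg (proj1_sig a - proj1_sig b))) as [|H]; auto.
    exfalso. apply Hab. destruct (znorm_zero _ (eq_sym H)) as [z Hz].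
    apply (circ_eq_mod a b z). lra.
  - intros k _. simpl.
    destruct (iter_F_circle k a) as [a' [z1 [-> H1]]].
    destruct (iter_F_circle k b) as [b' [z2 [-> H2]]].
    rewrite d_circle_circle, H1, H2.
    replace (proj1_sig a + INR k * alpha + IZR z1 - (proj1_sig b + INR k * alpha + IZR z2))
      with (proj1_sig a - proj1_sig b + IZR (z1 - z2)) by (rewrite minus_IZR; ring).
    rewrite znorm_shift. apply Rle_refl.
Qed.

(* Orbit points n <> m: their angles differ by (n - m) * alpha plus a vanishing
   square-root term, and (n - m) * alpha is not an integer. *)
Lemma orbit_pair_not_SProx (n m : Z) : n <> m -> ~ SProx (X := X) F (inl n) (inl m).
Proof.
  intro Hnm. set (e := znorm (IZR (n - m) * alpha)).
  assert (He : 0 < e) by (apply znorm_mult_alpha_pos; lia).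
  destruct (sqrt_int_close (e / 2) (Rabs (IZR n - IZR m))) as [M HM]; [lra|apply Rabs_pos|].
  set (K := Z.to_nat (up M + Z.abs n)).
  apply (not_SProx_of_thick_separation X F _ _ (e / 2) _ (thick_tail K)); [lra|].
  intros k Hk. simpl. rewrite !iter_F_orbit, d_orbit_orbit.
  pose proof (Rabs_pos (rad (n + Z.of_nat k) - rad (m + Z.of_nat k))).
  assert (Hsqrt : Rabs (sqrt (IZR (n + Z.of_nat k)) - sqrt (IZR (m + Z.of_nat k))) < e / 2).
  { apply HM.
    - destruct (archimed M).
      assert (IZR (up M) <= IZR (Z.abs (n + Z.of_nat k))) by (apply IZR_le; lia). lra.
    - rewrite !plus_IZR. right. f_equal. ring. }
  replace (theta (n + Z.of_nat k) - theta (m + Z.of_nat k))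
    with (IZR (n - m) * alpha + (sqrt (IZR (n + Z.of_nat k)) - sqrt (IZR (m + Z.of_nat k))))
    by (unfold theta; rewrite !plus_IZR, minus_IZR; ring).
  pose proof (znorm_perturb (IZR (n - m) * alpha)
                (sqrt (IZR (n + Z.of_nat k)) - sqrt (IZR (m + Z.of_nat k)))) as Hperturb.
  fold e in Hperturb. lra.
Qed.

(* Orbit point against circle point: the angle difference is a constant plus
   sqrt (n + k), which stays 1/4 away from Z along arbitrarily long runs of k. *)
Lemma orbit_circle_not_SProx (n : Z) (a : Circ) : ~ SProx (X := X) F (inl n) (inr a).
Proof.
  set (c := IZR n * alpha - proj1_sig a).
  apply (not_SProx_of_thick_separation X F _ _ (/ 4)
           (fun k => / 4 <= znorm (c + sqrt (IZR (n + Z.of_nat k))))); [|lra|].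
  - intro L. destruct (sqrt_long_runs_far_from_Z c L n) as [m [Hm Hrun]].
    exists (Z.to_nat (m - n)). intros k Hk.
    replace (n + Z.of_nat (Z.to_nat (m - n) + k))%Z with (m + Z.of_nat k)%Z by lia.
    apply Hrun, Hk.
  - intros k Hk. simpl. rewrite iter_F_orbit.
    destruct (iter_F_circle k a) as [b [z [-> Hz]]].
    rewrite d_orbit_circle, Hz.
    replace (theta (n + Z.of_nat k) - (proj1_sig a + INR k * alpha + IZR z))
      with (c + sqrt (IZR (n + Z.of_nat k)) + IZR (- z))
      by (unfold c, theta; rewrite opp_IZR, plus_IZR, INR_IZR_INZ; ring).
    rewrite znorm_shift. pose proof (rad_pos (n + Z.of_nat k)). lra.
Qed.

Lemma SProx_iff_eq (x y : Pt) : SProx (X := X) F x y <-> x = y.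
Proof.
  split; [|intros ->; apply SProx_refl].
  intro H. destruct x as [n|a], y as [m|b].
  - destruct (Z.eq_dec n m) as [->|Hnm]; [reflexivity|].
    exfalso. exact (orbit_pair_not_SProx n m Hnm H).
  - exfalso. exact (orbit_circle_not_SProx n b H).
  - exfalso. exact (orbit_circle_not_SProx m a (SProx_sym X F _ _ H)).
  - destruct (classic (a = b)) as [->|Hab]; [reflexivity|].
    exfalso. exact (circle_pair_not_SProx a b Hab H).
Qed.

Definition circle_origin : Circ := to_circle 0.

(* At the square times k = j^2 the orbit point 0 has angle j^2 alpha + j,
   which is the rotation angle of the circle origin modulo 1; hence the two
   orbits come within rad (j^2) -> 0 of each other. *)
Lemma orbit_origin_Prox : Prox (X := X) F (inl 0%Z) (inr circle_origin).
Proof.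
  intros eps Heps N. simpl.
  set (j := (Z.to_nat (up (/ eps)) + N + 1)%nat).
  exists (j * j)%nat. split; [nia|].
  rewrite iter_F_orbit. destruct (iter_F_circle (j * j) circle_origin) as [b [z [-> Hz]]].
  rewrite d_orbit_circle, Hz.
  replace (theta (0 + Z.of_nat (j * j)) - (proj1_sig circle_origin + INR (j * j) * alpha + IZR z))
    with (IZR (Z.of_nat j) + IZR (Int_part 0 - z)).
  2:{ unfold theta. simpl proj1_sig. unfold frac_part.
      rewrite Z.add_0_l, <- !INR_IZR_INZ, mult_INR, sqrt_square by apply pos_INR.
      rewrite minus_IZR. ring. }
  rewrite <- plus_IZR, znorm_int, Rplus_0_r.
  apply rad_lt_of_far; auto.
  destruct (archimed (/ eps)) as [Hup _].
  assert (IZR (up (/ eps)) <= IZR (Z.abs (0 + Z.of_nat (j * j)))) by (apply IZR_le; unfold j; nia).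
  lra.
Qed.

(* Heine-Borel for [0,1], in the form of finitely many balls with a
   prescribed radius function. *)
Lemma unit_interval_finite_balls (rho : R -> R) : (forall t, 0 < rho t) ->
  exists l : list R, forall s, 0 <= s <= 1 -> exists t, In t l /\ Rabs (s - t) < rho t.
Proof.
  intro Hrho.
  set (fam := mkfamily (fun _ => True) (fun t s => Rabs (s - t) < rho t) (fun _ _ => I)).
  assert (Hopen : covering_open_set (fun s => 0 <= s <= 1) fam).
  { split.
    - intros s _. exists s. simpl. rewrite Rminus_diag, Rabs_R0. apply Hrho.
    - intros t s Hs. simpl in Hs.
      assert (Hr : 0 < rho t - Rabs (s - t)) by lra.
      exists (mkposreal _ Hr). intros y Hy. unfold disc in Hy. simpl in Hy |- *.
      pose proof (Rabs_triang (y - s) (s - t)) as Htri.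
      replace (y - s + (s - t)) with (y - t) in Htri by ring. lra. }
  destruct (compact_P3 0 1 fam Hopen) as [D [Hcover [l Hl]]].
  exists l. intros s Hs. destruct (Hcover s Hs) as [t [Hst HDt]].
  exists t. split; [apply Hl; split; [exact I|exact HDt]|exact Hst].
Qed.

Lemma list_min_pos (rho : R -> R) (l : list R) : (forall t, 0 < rho t) ->
  exists delta, 0 < delta /\ forall t, In t l -> delta <= rho t.
Proof.
  intro Hrho. induction l as [|t l [delta [Hdelta Hl]]].
  - exists 1. split; [lra|]. intros t [].
  - exists (Rmin delta (rho t)). split; [apply Rmin_case; auto|].
    intros u [<-|Hu]; [apply Rmin_r|]. eapply Rle_trans; [apply Rmin_l|auto].
Qed.

Lemma circle_neighbourhood_cover (I : Type) (U : I -> Pt -> Prop) :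
  (forall i, is_open (X := X) (U i)) -> (forall x, exists i, U i x) ->
  exists (delta : R) (l : list I), 0 < delta /\
    forall y, height y < delta -> exists i, In i l /\ U i y.
Proof.
  intros Hopen Hcov.
  destruct (functional_choice (fun (t : R) (p : I * R) => 0 < snd p /\
              forall y, d (inr (to_circle t)) y < snd p -> U (fst p) y)) as [ball Hball].
  { intro t. destruct (Hcov (inr (to_circle t))) as [i Hi].
    destruct (Hopen i _ Hi) as [r [Hr Hri]]. exists (i, r). split; auto. }
  destruct (unit_interval_finite_balls (fun t => snd (ball t) / 2)) as [l Hl].
  { intro t. destruct (Hball t). lra. }
  destruct (list_min_pos (fun t => snd (ball t) / 2) l) as [delta [Hdelta Hmin]].
  { intro t. destruct (Hball t). lra. }
  exists delta, (map (fun t => fst (ball t)) l). split; auto.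
  intros y Hy. set (s := frac_part (angle y)).
  destruct (Hl s) as [t [Ht Hst]]; [pose proof (frac_part_range (angle y)); unfold s; lra|].
  exists (fst (ball t)). split; [apply (in_map (fun t => fst (ball t))), Ht|].
  apply (proj2 (Hball t)). specialize (Hmin t Ht).
  assert (Hd : d (inr (to_circle t)) y = height y + znorm (t - s)).
  { unfold d. cbn [height angle to_circle proj1_sig].
    rewrite Rminus_0_l, Rabs_Ropp, Rabs_right by (apply Rle_ge, height_nonneg).
    rewrite znorm_frac_part, (znorm_sym t s). unfold s.
    rewrite znorm_frac_part, znorm_sym. reflexivity. }
  rewrite Hd, znorm_sym. pose proof (znorm_le_abs (s - t)). lra.
Qed.

Lemma high_points_finite (delta : R) : 0 < delta ->
  exists l : list Pt, forall y, delta <= height y -> In y l.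
Proof.
  intro Hdelta. set (B := up (/ delta)).
  exists (map (fun k => inl (Z.of_nat k - B)%Z) (seq 0 (Z.to_nat (2 * B)))).
  intros [n|a] Hy; simpl in Hy; [|lra].
  assert (Hn : (Z.abs n < B)%Z).
  { apply lt_IZR. destruct (archimed (/ delta)) as [HB _]. fold B in HB.
    destruct (Rle_lt_dec (IZR (Z.abs n)) (/ delta)) as [|Hfar]; [lra|].
    pose proof (rad_lt_of_far delta n Hdelta Hfar). lra. }
  replace (inl n) with (inl (Z.of_nat (Z.to_nat (n + B)) - B)%Z : Pt) by (f_equal; lia).
  apply (in_map (fun k => inl (Z.of_nat k - B)%Z : Pt)), in_seq. lia.
Qed.

(* X is compact: the part near the circle is covered by finitely many members
   of the cover, and the rest is finite. *)
Lemma X_compact : compact_space X.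
Proof.
  intros I U Hopen Hcov.
  destruct (circle_neighbourhood_cover I U Hopen Hcov) as [delta [l [Hdelta Hnear]]].
  destruct (high_points_finite delta Hdelta) as [lp Hlp].
  destruct (functional_choice (fun (x : Pt) (i : I) => U i x) Hcov) as [pick Hpick].
  exists (l ++ map pick lp). intro x.
  destruct (Rlt_le_dec (height x) delta) as [Hx|Hx].
  - destruct (Hnear x Hx) as [i [Hi Hix]]. exists i. split; [apply in_or_app; left|]; auto.
  - exists (pick x). split; [|apply Hpick]. apply in_or_app. right. apply in_map, Hlp, Hx.
Qed.

Theorem mainTheorem13 :
  exists (X : Metric_Space) (f : Base X -> Base X),
    compact_space X /\ homeomorphism f /\
    (forall x y, SProx f x y <-> x = y) /\
    ~ (forall x y, Prox f x y <-> x = y).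
Proof.
  exists X, F. split; [exact X_compact|]. split; [exact F_homeomorphism|].
  split; [exact SProx_iff_eq|].
  intro Hdiag. pose proof (proj1 (Hdiag _ _) orbit_origin_Prox) as Heq. discriminate Heq.
Qed.
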